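(* Let $f\in K^{\times}$ satisfy $f'=af$ for some $a\in k$, and let $g\in K$ satisfy a nonzero homogeneous linear differential equation with coefficients in $k$. Assume $f=P(g)$ for some nonconstant polynomial $P$ with coefficients in $k$. Then there exist $\theta\in K$ with $\theta'/\theta\in k$, an integer $n\in\mathbb{Z}_{\geq 0}$ and $c,d\in k$ such that $$f=\theta^{n}\quad\text{and}\quad g=c+d\theta.$$
   Context: $K$ is a differential field of characteristic zero (derivation $y\mapsto y'$), $k\subset K$ is an algebraically closed differential subfield, and $K$ and $k$ have the same field of constants $C$. *)

From mathcomp Require Import all_boot all_order all_algebra.
Set Implicit Arguments. Unset Strict Implicit. Unset Printing Implicit Defensive.
Import GRing.Theory.
Local Open Scope ring_scope.

Definition is_derivation (K : fieldType) (D : K -> K) : Prop :=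
  (forall x y, D (x + y) = D x + D y) /\ (forall x y, D (x * y) = D x * y + x * D y).

Definition is_subfield (K : fieldType) (k : {pred K}) : Prop :=
  (0 \in k) /\ (1 \in k) /\
  (forall x y, x \in k -> y \in k -> (x - y \in k) /\ (x * y \in k)) /\
  (forall x, x \in k -> x^-1 \in k).

Definition D_stable (K : fieldType) (D : K -> K) (k : {pred K}) : Prop :=
  forall x, x \in k -> D x \in k.

Definition alg_closed_in (K : fieldType) (k : {pred K}) : Prop :=
  forall p : {poly K}, p \is a polyOver k -> (1 < size p)%N ->
    exists2 x, x \in k & root p x.

Definition same_constants (K : fieldType) (D : K -> K) (k : {pred K}) : Prop :=
  forall x, D x = 0 -> x \in k.

Definition satisfies_lin_ode (K : fieldType) (D : K -> K) (k : {pred K}) (y : K) : Prop :=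
  exists (n : nat) (c : nat -> K),
    (forall i, c i \in k) /\ (exists2 i, (i <= n)%N & c i != 0) /\
    \sum_(i < n.+1) c i * iter i D y = 0.

From HB Require Import structures.
From mathcomp Require Import all_boot all_order all_algebra.
From mathcomp Require Import ring zify.
Set Implicit Arguments.
Unset Strict Implicit.
Unset Printing Implicit Defensive.

Import GRing.Theory.
Local Open Scope ring_scope.

(* If [g] lies in [k], take [theta = f].  Otherwise [g] is transcendental over the
   algebraically closed field [k], and differentiating [f = P(g)] gives
   [P'(g) g' = a P(g) - P^D(g)], so [g'] is a rational function of [g] over [k].  At a
   pole [q] in [k] of this rational function, the successive derivatives of [g - q]
   would have poles of strictly increasing order, which no linear differential
   equation over [k] can balance; hence [g'] is a polynomial in [g], of degree at
   most one by comparing degrees: [g' = al g + be].  Shift [g] by a root [r] of [P]: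
   comparing coefficients in [f' = a f] kills the constant term of [(g - r)'] and
   shows that each monomial [b_i (g - r)^i] of [f] satisfies [y' = a y].  The ratio of
   two of them would then be a constant, hence in [k], making [g - r] algebraic; so
   [f = b (g - r)^n], and [theta = s (g - r)] with [s^n = b] works. *)

Section PolynomialFacts.

Variable R : ringType.
Implicit Types p : {poly R}.

Lemma lowest_coef_neq0 p :
  p != 0 -> exists2 j, p`_j != 0 & forall i, (i < j)%N -> p`_i = 0.
Proof.
move=> p0; have ex : exists j, p`_j != 0.
  by exists (size p).-1; rewrite -lead_coefE lead_coef_eq0.
have [j pj jmin] := ex_minnP ex; exists j => // i lt_ij.
by apply/eqP; apply: contraTT lt_ij => /jmin; rewrite -leqNgt.
Qed.

Lemma drop_poly_mulXn n p :
  (forall i, (i < n)%N -> p`_i = 0) -> drop_poly n p * 'X^n = p.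
Proof.
move=> low; rewrite -[RHS](poly_take_drop n).
suff -> : take_poly n p = 0 by rewrite add0r.
by apply/polyP => i; rewrite coef_take_poly coef0; case: ifP => // /low.
Qed.

Lemma polyOver_drop_poly (S : addrClosed R) n p :
  p \is a polyOver S -> drop_poly n p \is a polyOver S.
Proof. by move/polyOverP => Sp; apply/polyOverP => i; rewrite coef_drop_poly. Qed.

Lemma size_mul_XsubC p a : p != 0 -> size (p * ('X - a%:P)) = (size p).+1.
Proof. by move=> p0; rewrite size_Mmonic ?monicXsubC // size_XsubC addn2. Qed.

End PolynomialFacts.

Lemma size_deriv_char0 (R : idomainType) (p : {poly R}) :
  [pchar R] =i pred0 -> size p^`() = (size p).-1.
Proof.
move=> R0; have [->|p0] := eqVneq p 0; first by rewrite deriv0 size_poly0.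
apply/eqP; rewrite eqn_leq -ltnS (leq_trans (lt_size_deriv p0)) ?leqSpred //=.
case sp: (size p) => [|[|n]] //=.
have : p^`()`_n != 0.
  rewrite coef_deriv -mulr_natr mulf_neq0 ?(pcharf0P _).1 //.
  have -> : n.+1 = (size p).-1 by rewrite sp.
  by rewrite -lead_coefE lead_coef_eq0.
by apply: contraR; rewrite -leqNgt => /(nth_default 0) ->.
Qed.

Section DifferentialSubfield.

Variables (K : fieldType) (D : K -> K) (k : {pred K}).
Hypotheses (derD : is_derivation D) (subk : is_subfield k).

Lemma derivationD : {morph D : x y / x + y}.
Proof. by case: derD. Qed.

Lemma derivationM x y : D (x * y) = D x * y + x * D y.
Proof. by case: derD. Qed.

Lemma derivationB : {morph D : x y / x - y}.
Proof. by move=> x y; apply/(addIr (D y)); rewrite -derivationD !subrK. Qed.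

HB.instance Definition _ := GRing.isZmodMorphism.Build K K D derivationB.

Lemma derivation1 : D 1 = 0.
Proof. by apply/(addIr (D 1)); rewrite add0r -{3}[1]mulr1 derivationM mulr1 mul1r. Qed.

Lemma derivationXn x n : D (x ^+ n) = n%:R * x ^+ n.-1 * D x.
Proof.
case: n => [|n]; first by rewrite expr0 derivation1 !mul0r.
elim: n => [|n IH]; first by rewrite expr1 expr0 mulr1 mul1r.
by rewrite exprS derivationM IH [n.+2%:R]mulrS /= exprS; ring.
Qed.

Lemma derivationV x : x != 0 -> D x^-1 = - D x / x ^+ 2.
Proof.
move=> x0; have := derivationM x x^-1; rewrite mulfV // derivation1 => /esym/eqP.
rewrite addr_eq0 => /eqP Dx; apply: (mulfI x0).
by rewrite -[x * _]opprK -Dx; field.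
Qed.

Lemma derivation_div_eq0 a x y :
  y != 0 -> D x = a * x -> D y = a * y -> D (x / y) = 0.
Proof. by move=> y0 Dx Dy; rewrite derivationM derivationV // Dx Dy; field. Qed.

Lemma derivation_horner p x : D p.[x] = (map_poly D p).[x] + p^`().[x] * D x.
Proof.
elim/poly_ind: p => [|p c IH].
  by rewrite map_poly0 deriv0 !horner0 raddf0 mul0r addr0.
have -> : map_poly D (p * 'X + c%:P) = map_poly D p * 'X + (D c)%:P.
  apply/polyP => i; rewrite coef_map /= !coefD !coefMX !coefC.
  by case: i => [|i] /=; rewrite ?add0r ?addr0 ?raddf0 ?coef_map.
rewrite derivMXaddC !hornerMXaddC derivationD derivationM IH hornerD hornerMX; ring.
Qed.

Lemma iter_derivationB i x y : iter i D (x - y) = iter i D x - iter i D y.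
Proof. by elim: i => //= i ->; rewrite raddfB. Qed.

Lemma subfield_divring_closed : GRing.divring_closed k.
Proof.
case: subk => k0 [k1 [kBM kV]]; split => // x y xk yk; first by case: (kBM _ _ xk yk).
by case: (kBM _ _ xk (kV _ yk)).
Qed.

HB.instance Definition _ := GRing.isDivringClosed.Build K k subfield_divring_closed.

Lemma polyOver_mulXn_factor p : p \is a polyOver k -> p != 0 ->
  exists e A, [/\ A \is a polyOver k, A.[0] != 0 & p = A * 'X^e].
Proof.
move=> pk p0; have [e pe low] := lowest_coef_neq0 p0.
exists e, (drop_poly e p); split; rewrite ?polyOver_drop_poly ?drop_poly_mulXn //.
by rewrite horner_coef0 coef_drop_poly.
Qed.

Lemma polyOver_root_factor p q : p \is a polyOver k -> q \in k -> root p q ->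
  exists2 p1, p1 \is a polyOver k & p = p1 * ('X - q%:P).
Proof.
move=> pk qk /rootP pq; set T := p \Po ('X + q%:P).
have T0 i : (i < 1)%N -> T`_i = 0.
  by case: i => // _; rewrite -horner_coef0 horner_comp !hornerE.
exists (drop_poly 1 T \Po ('X - q%:P)).
  by rewrite polyOver_comp ?polyOverXsubC ?polyOver_drop_poly ?polyOver_comp ?polyOverXaddC.
rewrite -[X in _ * X]comp_polyX -comp_polyM drop_poly_mulXn //.
by rewrite /T -comp_polyA comp_polyD comp_polyX comp_polyC subrK comp_polyXr.
Qed.

Hypothesis algk : alg_closed_in k.

Lemma polyOver_root_notin p y :
  p \is a polyOver k -> y \notin k -> root p y -> p = 0.
Proof.
move=> + yk; have [n] := ubnP (size p); elim: n p => // n IH p sp pk py.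
have [->//|p0] := eqVneq p 0.
have [sp1|sp2] := leqP (size p) 1.
  by move: py p0; rewrite [p]size1_polyC // rootC => /eqP->; rewrite eqxx.
have [r rk pr] := algk pk sp2.
have [p1 p1k ep] := polyOver_root_factor pk rk pr.
have p10 : p1 != 0 by apply: contraNneq p0 => p10; rewrite ep p10 mul0r.
have yr : (y == r) = false by apply: contraNF yk => /eqP->.
suff p1y : root p1 y.
  have sp1 : size p = (size p1).+1 by rewrite ep; apply: size_mul_XsubC.
  by move: p10; rewrite (IH p1) ?eqxx // -ltnS -sp1.
by move: py; rewrite ep rootM root_XsubC yr orbF.
Qed.

Lemma polyOver_horner_notin_inj y p q : y \notin k ->
  p \is a polyOver k -> q \is a polyOver k -> p.[y] = q.[y] -> p = q.
Proof.
move=> yk pk qk pqy; apply/eqP; rewrite -subr_eq0; apply/eqP.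
by apply: (polyOver_root_notin _ yk); rewrite ?rpredB // rootE hornerD hornerN pqy subrr.
Qed.

Hypotheses (char0 : [pchar K] =i pred0) (stabk : D_stable D k).

Lemma natrS_neq0 n : n.+1%:R != 0 :> K.
Proof. by rewrite (pcharf0P _).1. Qed.

Lemma polyOver_map_derivation {p} : p \is a polyOver k -> map_poly D p \is a polyOver k.
Proof. by move/polyOverP => pk; apply/polyOverP => i; rewrite coef_map stabk. Qed.

Lemma iter_derivation_in i x : x \in k -> iter i D x \in k.
Proof. by elim: i => //= i IH /IH; apply: stabk. Qed.

Section Poles.

Variables (u : K) (A B : {poly K}) (e : nat).
Hypotheses (Ak : A \is a polyOver k) (Bk : B \is a polyOver k).
Hypotheses (A0 : A.[0] != 0) (B0 : B.[0] != 0).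
Hypothesis Du : u ^+ e.+1 * A.[u] * D u = B.[u].

(* [x = C(u) / (u^n A(u)^j)] with [C] over [k] and [C(0), A(0) != 0]: as a rational
   function of [u], [x] has a pole of order [n] at [0]. *)
Definition pole_at0 (x : K) (n j : nat) :=
  exists2 C : {poly K}, C \is a polyOver k /\ C.[0] != 0 & x * u ^+ n * A.[u] ^+ j = C.[u].

Lemma pole_at0_derivation z s j :
  pole_at0 z s.+1 j.+1 -> pole_at0 (D z) (s.+1 + e.+2) j.+3.
Proof.
case=> C [Ck C0] zC.
(* Differentiate [z u^(s+1) A(u)^(j+1) = C(u)] and multiply through by [u^(e+2) A(u)^2];
   the constant term of the new numerator is [-(s+1) C(0) B(0) A(0)]. *)
exists ('X^(e.+2) * A ^+ 2 * map_poly D C + 'X * A * C^`() * B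
  - s.+1%:R%:P * (C * B * A)
  - j.+1%:R%:P * (C * ('X^(e.+2) * A * map_poly D A + 'X * A^`() * B))); first split.
- have Xk : 'X \is a polyOver k := polyOverX _.
  have C'k := polyOver_deriv Ck; have A'k := polyOver_deriv Ak.
  have CDk := polyOver_map_derivation Ck; have ADk := polyOver_map_derivation Ak.
  by repeat (apply: rpredB || apply: rpredD || apply: rpredX || apply: rpredM);
    rewrite ?polyOverC ?rpred_nat.
- rewrite !(hornerE, hornerMn) /= !expr0n /= !(mul0r, mulr0, add0r, addr0, sub0r, subr0).
  by rewrite oppr_eq0 !mulf_neq0 // natrS_neq0.
have DC : D C.[u] = D z * u ^+ s.+1 * A.[u] ^+ j.+1
    + z * (s.+1%:R * u ^+ s * D u) * A.[u] ^+ j.+1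
    + z * u ^+ s.+1 * (j.+1%:R * A.[u] ^+ j * D A.[u]).
  by rewrite -zC !derivationM !derivationXn /=; ring.
have CD : (map_poly D C).[u] = D C.[u] - C^`().[u] * D u.
  by rewrite derivation_horner addrK.
have AD : (map_poly D A).[u] = D A.[u] - A^`().[u] * D u.
  by rewrite derivation_horner addrK.
rewrite !(hornerXn, hornerD, hornerN, hornerM, hornerC, hornerX, horner_exp).
rewrite CD AD DC -Du -zC exprD !exprS.
move: (u ^+ s) (u ^+ e) (A.[u] ^+ j) (D A.[u]) (s.+1%:R : K) (j.+1%:R : K) => U E W DA S J.
ring.
Qed.

Lemma pole_at0_iter_derivation m :
  pole_at0 (iter m.+1 D u) (e + m * e.+2).+1 (m.*2).+1.
Proof.
elim: m => [|m IH].
  by exists B; [split | rewrite /= mul0n addn0 expr1 -Du; ring].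
have -> : (e + m.+1 * e.+2).+1 = ((e + m * e.+2).+1 + e.+2)%N by rewrite mulSn; lia.
by rewrite doubleS; apply: pole_at0_derivation.
Qed.

Lemma pole_at0_lower_sum (c : nat -> K) m : (forall i, c i \in k) ->
  exists2 V : {poly K}, V \is a polyOver k /\ V.[0] = 0 &
    (\sum_(1 <= i < m.+1) c i * iter i D u) * u ^+ (e + m * e.+2).+1
      * A.[u] ^+ (m.*2).+1 = V.[u].
Proof.
move=> ck; elim: m => [|m [V [Vk V0] VT]].
  by exists 0; rewrite ?big_geq ?mul0r ?horner0 ?rpred0.
have [C [Ck C0] CT] := pole_at0_iter_derivation m.
exists ((V + (c m.+1)%:P * C) * 'X^(e.+2) * A ^+ 2); first split.
- by repeat (apply: rpredD || apply: rpredX || apply: rpredM);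
    rewrite ?polyOverC ?polyOverX.
- by rewrite !(hornerXn, hornerM) expr0n mulr0 mul0r.
rewrite !(hornerXn, hornerD, hornerM, hornerC, horner_exp) -CT -VT big_nat_recr //=.
have -> : (e + m.+1 * e.+2).+1 = ((e + m * e.+2).+1 + e.+2)%N by rewrite mulSn; lia.
have -> : (m.+1.*2).+1 = ((m.*2).+1 + 2)%N by rewrite doubleS; lia.
rewrite !exprD.
move: (u ^+ (e + m * e.+2).+1) (A.[u] ^+ (m.*2).+1) (u ^+ e.+2) => U W E.
move: (\sum_(1 <= i < m.+1) c i * iter i D u) => S.
ring.
Qed.

Lemma pole_at0_lin_relation (c : nat -> K) m kap :
  u \notin k -> (forall i, c i \in k) -> c m.+1 != 0 -> kap \in k ->
  \sum_(i < m.+2) c i * iter i D u != kap.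
Proof.
move=> uk ck cm kapk; apply/eqP => rel.
have [V [Vk V0] VT] := pole_at0_lower_sum m ck.
have [C [Ck C0] CT] := pole_at0_iter_derivation m.
(* [W(u)] is [\sum_i c_i u^(i) - kap] times the denominator of [iter m.+1 D u],
   whereas [W(0) = c_(m+1) C(0) != 0]. *)
pose W := ((c 0)%:P * 'X - kap%:P) * 'X^((e + m * e.+2).+1) * A ^+ (m.*2).+1
  + V + (c m.+1)%:P * C.
have Wk : W \is a polyOver k.
  by repeat (apply: rpredB || apply: rpredD || apply: rpredX || apply: rpredM);
    rewrite ?polyOverC ?polyOverX.
have : W = 0.
  apply: (polyOver_root_notin Wk uk); apply/rootP.
  rewrite !(hornerXn, hornerD, hornerN, hornerM, hornerC, hornerX, horner_exp) -VT -CT.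
  move: rel; rewrite -(big_mkord xpredT (fun i => c i * iter i D u)).
  rewrite big_ltn // big_nat_recr //= => <-.
  move: (u ^+ (e + m * e.+2).+1) (A.[u] ^+ (m.*2).+1) => U X.
  move: (\sum_(1 <= i < m.+1) c i * iter i D u) => S.
  ring.
move/(congr1 (horner^~ 0))/eqP.
rewrite horner0 !(hornerXn, hornerD, hornerN, hornerM, hornerC, hornerX, horner_exp) V0.
by rewrite expr0n /= !(mulr0, mul0r, add0r) mulf_eq0 (negPf cm) (negPf C0).
Qed.

End Poles.

Lemma lin_ode_top_coef g : g != 0 -> satisfies_lin_ode D k g ->
  exists c m, [/\ forall i, c i \in k, c m.+1 != 0 &
    \sum_(i < m.+2) c i * iter i D g = 0].
Proof.
move=> g0 [n [c [ck [[i0 i0n ci0] ode]]]].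
pose top i := (i <= n)%N && (c i != 0).
have ex_top : exists i, top i by exists i0; apply/andP.
have top_le i : top i -> (i <= n)%N by case/andP.
have [M /andP[Mn cM] Mmax] := ex_maxnP ex_top top_le.
have odeM : \sum_(i < M.+1) c i * iter i D g = 0.
  rewrite -[RHS]ode -!(big_mkord xpredT (fun i => c i * iter i D g)).
  rewrite [RHS](@big_cat_nat _ _ _ M.+1) //= [X in _ + X]big1_seq ?addr0 // => i.
  rewrite mem_index_iota => /andP[_ /andP[Mi iN]].
  apply/eqP; rewrite mulf_eq0; apply/orP; left; apply: contraTT Mi => ci.
  by rewrite -leqNgt Mmax //; apply/andP; split; first by rewrite -ltnS.
case: M Mn cM {Mmax} odeM => [|m] _ cM odeM; last by exists c, m.
by move: odeM; rewrite big_ord1 /= => /eqP; rewrite mulf_eq0 (negPf cM) (negPf g0).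
Qed.

Lemma lin_ode_no_pole g S N q : g \notin k -> satisfies_lin_ode D k g ->
  S \is a polyOver k -> N \is a polyOver k -> S != 0 -> q \in k ->
  root S q -> ~~ root N q -> S.[g] * D g != N.[g].
Proof.
move=> gk ode Sk Nk S0 qk /rootP Sq Nq; apply/eqP => SN.
set u := g - q.
have uk : u \notin k by rewrite rpredBr.
pose St := S \Po ('X + q%:P).
have Stk : St \is a polyOver k by rewrite polyOver_comp ?polyOverXaddC.
have St0 : St != 0.
  by rewrite -size_poly_eq0 size_comp_poly2 ?size_XaddC // size_poly_eq0.
have [[|e] [A [Ak A0 eSt]]] := polyOver_mulXn_factor Stk St0.
  by move: A0; rewrite -[A]mulr1 -(expr0 'X) -eSt horner_comp !hornerE Sq eqxx.
pose B := (N - (D q)%:P * S) \Po ('X + q%:P).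
have Bk : B \is a polyOver k.
  by rewrite polyOver_comp ?polyOverXaddC // rpredB // rpredM // polyOverC stabk.
have B0 : B.[0] != 0 by rewrite horner_comp !hornerE Sq mulr0 subr0.
have Du : u ^+ e.+1 * A.[u] * D u = B.[u].
  have : St.[u] = S.[g] by rewrite horner_comp !hornerE subrK.
  rewrite eSt hornerM hornerXn => Su.
  by rewrite /B horner_comp !hornerE subrK raddfB -SN -Su; ring.
have g0 : g != 0 by apply: contraNneq gk => ->; rewrite rpred0.
have [c [m [ck cm ode0]]] := lin_ode_top_coef g0 ode.
have kapk : - \sum_(i < m.+2) c i * iter i D q \in k.
  by rewrite rpredN rpred_sum // => i _; rewrite rpredM ?iter_derivation_in.
have := pole_at0_lin_relation Ak Bk A0 B0 Du uk ck cm kapk.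
rewrite /u; under eq_bigr do rewrite iter_derivationB mulrBr.
by rewrite sumrB ode0 sub0r eqxx.
Qed.

Lemma lin_ode_deriv_poly g S N : g \notin k -> satisfies_lin_ode D k g ->
  S \is a polyOver k -> N \is a polyOver k -> S != 0 -> S.[g] * D g = N.[g] ->
  exists2 R, R \is a polyOver k & D g = R.[g].
Proof.
move=> gk ode; have [n] := ubnP (size S).
elim: n S N => // n IH S N sS Sk Nk S0 SN.
have [sS1|sS2] := leqP (size S) 1.
  have S00 : S`_0 != 0 by apply: contraNneq S0 => S00; rewrite [S]size1_polyC // S00.
  exists ((S`_0)^-1%:P * N); first by rewrite rpredM ?polyOverC ?rpredV ?(polyOverP Sk).
  have Sg : S.[g] = S`_0 by rewrite {1}[S]size1_polyC // hornerC.
  by rewrite hornerM hornerC -SN Sg mulKf.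
have [q qk Sq] := algk Sk sS2.
have [Nq|Nq] := boolP (root N q); last first.
  by have /eqP := lin_ode_no_pole gk ode Sk Nk S0 qk Sq Nq.
have [S1 S1k eS] := polyOver_root_factor Sk qk Sq.
have [N1 N1k eN] := polyOver_root_factor Nk qk Nq.
have S10 : S1 != 0 by apply: contraNneq S0 => S10; rewrite eS S10 mul0r.
apply: (IH S1 N1) => //.
  by rewrite -ltnS -(size_mul_XsubC q S10) -eS.
have gq : g - q != 0 by rewrite subr_eq0; apply: contraNneq gk => ->.
apply: (mulIf gq); move: SN; rewrite eS eN !hornerM hornerXsubC => <-.
by rewrite mulrAC.
Qed.

Lemma exp_poly_deriv_affine g f a P : g \notin k -> satisfies_lin_ode D k g ->
  a \in k -> D f = a * f -> P \is a polyOver k -> (1 < size P)%N -> f = P.[g] ->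
  exists al be, [/\ al \in k, be \in k & D g = al * g + be].
Proof.
move=> gk ode ak Df Pk sP fP.
pose N := a *: P - map_poly D P.
have Nk : N \is a polyOver k by rewrite rpredB ?polyOverZ ?polyOver_map_derivation.
have P'k : P^`() \is a polyOver k := polyOver_deriv Pk.
have sP' : size P^`() = (size P).-1 := size_deriv_char0 P char0.
have P'0 : P^`() != 0 by rewrite -size_poly_eq0 sP' -lt0n -ltnS (ltn_predK sP).
have P'N : P^`().[g] * D g = N.[g].
  by rewrite hornerD hornerN hornerZ -fP -Df fP derivation_horner; ring.
have [R Rk DgR] := lin_ode_deriv_poly gk ode P'k Nk P'0 P'N.
have P'R : P^`() * R = N.
  by apply: (polyOver_horner_notin_inj gk); rewrite ?rpredM // hornerM -DgR.
have sR : (size R <= 2)%N.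
  have [->|R0] := eqVneq R 0; first by rewrite size_poly0.
  have : (size N <= size P)%N.
    rewrite (leq_trans (size_polyD _ _)) // size_polyN geq_max size_scale_leq.
    by rewrite size_poly.
  rewrite -P'R size_mul // sP'; move: sP.
  by case: (size P) => [|[|p]] //= _; rewrite -[p.+2]addn2 leq_add2l.
exists R`_1, R`_0; split; try exact: (polyOverP Rk).
rewrite DgR (horner_coef_wide _ sR) !big_ord_recr big_ord0 /=.
by rewrite add0r expr0 expr1 mulr1 addrC mulrC.
Qed.

Hypothesis constk : same_constants D k.

Section AffineExponential.

Variables (u al ga a : K) (Q : {poly K}).
Hypotheses (uk : u \notin k) (alk : al \in k) (gak : ga \in k) (ak : a \in k).
Hypotheses (Qk : Q \is a polyOver k) (Q0 : Q`_0 = 0) (Qn0 : Q != 0).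
Hypotheses (Du : D u = al * u + ga) (DQ : D Q.[u] = a * Q.[u]).

Lemma coef_exp_affine i :
  D Q`_i + al * (Q`_i *+ i) + ga * (Q`_i.+1 *+ i.+1) = a * Q`_i.
Proof.
have E : map_poly D Q + al *: ('X * Q^`()) + ga *: Q^`() = a *: Q.
  apply: (polyOver_horner_notin_inj uk); rewrite ?polyOverZ //.
    by rewrite !rpredD ?polyOverZ ?rpredM ?polyOverX ?polyOver_deriv ?polyOver_map_derivation.
  rewrite !(hornerD, hornerZ, hornerM, hornerX) -DQ derivation_horner Du; ring.
have := congr1 (fun p : {poly K} => p`_i) E.
by rewrite !coefD !coefZ coef_map coefXM !coef_deriv; case: i.
Qed.

Lemma exp_affine_shift_eq0 : ga = 0.
Proof.
have [[|j] Qj low] := lowest_coef_neq0 Qn0; first by rewrite Q0 eqxx in Qj.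
have := coef_exp_affine j; rewrite low // raddf0 mul0rn !mulr0 !add0r => /eqP.
by rewrite mulf_eq0 -mulr_natr mulf_eq0 (negPf Qj) (negPf (natrS_neq0 j)) !orbF => /eqP.
Qed.

Lemma derivation_exp_affine_monomial i : D (Q`_i * u ^+ i) = a * (Q`_i * u ^+ i).
Proof.
have DQi := coef_exp_affine i; rewrite exp_affine_shift_eq0 mul0r addr0 in DQi.
rewrite derivationM derivationXn Du exp_affine_shift_eq0 addr0 [RHS]mulrA -DQi.
by case: i {DQi} => [|i]; rewrite -mulr_natr /= ?exprS; ring.
Qed.

Lemma coef_lt_lead_exp_affine i : (i < (size Q).-1)%N -> Q`_i = 0.
Proof.
move=> lt_i_n; set n := (size Q).-1 in lt_i_n *.
apply/eqP; apply: contraT => Qi.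
have Qn : Q`_n != 0 by rewrite -lead_coefE lead_coef_eq0.
have u0 : u != 0 by apply: contraNneq uk => ->; rewrite rpred0.
have ratio_k : (Q`_n * u ^+ n) / (Q`_i * u ^+ i) \in k.
  by apply/constk/derivation_div_eq0; rewrite ?derivation_exp_affine_monomial ?mulf_neq0 ?expf_neq0.
have unik : u ^+ (n - i) \in k.
  have -> : u ^+ (n - i) = (Q`_n * u ^+ n) / (Q`_i * u ^+ i) * Q`_i / Q`_n.
    have un : u ^+ n = u ^+ (n - i) * u ^+ i by rewrite -exprD subnK // ltnW.
    by rewrite un; field; rewrite Qi Qn expf_neq0.
  by rewrite rpredM ?rpredV ?(polyOverP Qk) // rpredM ?(polyOverP Qk).
have := @polyOver_root_notin ('X^(n - i) - (u ^+ (n - i))%:P) u.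
rewrite rpredB ?polyOverXn ?polyOverC // rootE !hornerE subrr eqxx.
move=> /(_ isT uk isT)/eqP; rewrite -size_poly_eq0 size_XnsubC // subn_gt0.
by rewrite lt_i_n.
Qed.

Lemma horner_exp_affine : Q.[u] = lead_coef Q * u ^+ (size Q).-1.
Proof.
have sQ : size Q = (size Q).-1.+1 by rewrite prednK // size_poly_gt0.
rewrite (horner_coef_wide _ (eq_leq sQ)) lead_coefE big_ord_recr /= big1 ?add0r // => i _.
by rewrite coef_lt_lead_exp_affine ?mul0r.
Qed.

End AffineExponential.

Lemma exp_poly_affine_power (g f a al be : K) (P : {poly K}) :
  g \notin k -> al \in k -> be \in k -> D g = al * g + be ->
  f != 0 -> a \in k -> D f = a * f ->
  P \is a polyOver k -> (1 < size P)%N -> f = P.[g] ->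
  exists (theta : K) (n : nat) (c d : K),
    [/\ theta != 0, D theta / theta \in k, c \in k & d \in k] /\
    f = theta ^+ n /\ g = c + d * theta.
Proof.
move=> gk alk bek Dg f0 ak Df Pk sP fP.
have [r rk /rootP Pr] := algk Pk sP.
pose u := g - r; pose Q := P \Po ('X + r%:P); pose ga := al * r + be - D r.
have uk : u \notin k by rewrite rpredBr.
have u0 : u != 0 by apply: contraNneq uk => ->; rewrite rpred0.
have gak : ga \in k by rewrite rpredB ?rpredD ?rpredM ?stabk.
have Qk : Q \is a polyOver k by rewrite polyOver_comp ?polyOverXaddC.
have fQ : f = Q.[u] by rewrite horner_comp !hornerE subrK.
have Q0 : Q`_0 = 0 by rewrite -horner_coef0 horner_comp !hornerE Pr.
have Qn0 : Q != 0 by apply: contraNneq f0 => Q0'; rewrite fQ Q0' horner0.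
have Du : D u = al * u + ga by rewrite derivationB Dg /u /ga; ring.
have DQ : D Q.[u] = a * Q.[u] by rewrite -fQ.
have ga0 := exp_affine_shift_eq0 uk alk gak ak Qk Q0 Qn0 Du DQ.
have := horner_exp_affine uk alk gak ak Qk Q0 Qn0 Du DQ.
rewrite -fQ; set n := (size Q).-1 => fu.
have n0 : n != 0%N.
  by apply: contraNneq f0 => n0; rewrite fu lead_coefE -/n n0 Q0 mul0r.
have leadk : lead_coef Q \in k by rewrite lead_coefE (polyOverP Qk).
have Xk : 'X^n - (lead_coef Q)%:P \is a polyOver k by rewrite rpredB ?polyOverXn ?polyOverC.
have sX : (1 < size ('X^n - (lead_coef Q)%:P)%R)%N.
  by rewrite size_XnsubC ?ltnS ?lt0n.
have [s sk /rootP] := algk Xk sX.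
rewrite !hornerE => /eqP; rewrite subr_eq0 => /eqP sn.
have s0 : s != 0.
  by apply: contraNneq Qn0 => s0; rewrite -lead_coef_eq0 -sn s0 expr0n (negPf n0).
exists (s * u), n, r, s^-1; split; [split | split].
- by rewrite mulf_neq0.
- have -> : D (s * u) / (s * u) = D s / s + al.
    by rewrite derivationM Du ga0 addr0; field; rewrite s0 u0.
  by rewrite rpredD ?rpredM ?rpredV ?stabk.
- exact: rk.
- by rewrite rpredV.
- by rewrite fu exprMn sn.
- by rewrite mulKf // /u addrC subrK.
Qed.

End DifferentialSubfield.

Theorem corollary13 (K : fieldType) (D : K -> K) (k : {pred K}) :
  is_derivation D ->
  [pchar K] =i pred0 ->
  is_subfield k -> D_stable D k -> alg_closed_in k -> same_constants D k ->
  forall (f a g : K) (P : {poly K}),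
    f != 0 -> a \in k -> D f = a * f ->
    satisfies_lin_ode D k g ->
    P \is a polyOver k -> (1 < size P)%N -> f = P.[g] ->
    exists (theta : K) (n : nat) (c d : K),
      [/\ theta != 0, D theta / theta \in k, c \in k & d \in k] /\
      f = theta ^+ n /\ g = c + d * theta.
Proof.
move=> derD char0 subk stabk algk constk f a g P f0 ak Df ode Pk sP fP.
have [gk|gk] := boolP (g \in k).
  have k0 : 0 \in k by case: subk.
  by exists f, 1%N, g, 0; rewrite Df mulfK // expr1 mul0r addr0.
have [al [be [alk bek Dg]]] :=
  exp_poly_deriv_affine derD subk algk char0 stabk gk ode ak Df Pk sP fP.
exact: (exp_poly_affine_power derD subk algk char0 stabk constk gk alk bek Dg f0 ak Df Pk sP fP).
Qed.
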